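(* Let $p\geq1$ and $A>0$. Let $\rho(\tau)$ be the covariance function of a centered stationary random process, and suppose $\rho$ is continuous and $\rho(T)\to0$ as $T\to\infty$. For $T>0$ and $\tau\in[0,A]$ put \[ \psi(T,\tau)=\frac{2}{T^2}\int_0^{T}(T-u)\bigl(\rho^2(u)+\rho(u+\tau)\rho(u-\tau)\bigr)\,du, \qquad C_p=C_p(T)=\int_0^{A}\bigl(\psi(T,\tau)\bigr)^{p/2}\,d\tau . \] Then $C_p\to0$ as $T\to\infty$.
   Context: The covariance function $\rho$ of a stationary process is an even function defined on all of $\mathbb{R}$. *)

From HB Require Import structures.
From mathcomp Require Import all_boot all_order all_algebra.
From mathcomp Require Import all_classical all_reals all_analysis.
Set Implicit Arguments. Unset Strict Implicit. Unset Printing Implicit Defensive.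
Import Order.TTheory GRing.Theory Num.Theory.
Import numFieldNormedType.Exports.
Local Open Scope classical_set_scope.
Local Open Scope ring_scope.

Definition centered_stationary_cov (R : realType) (d : measure_display)
    (Omega : measurableType d) (P : probability Omega R)
    (X : R -> Omega -> R) (rho : R -> R) : Prop :=
  [/\ (forall t, X t \in Lfun P 2%:E),
      (forall t, ('E_P[X t] = 0)%E) &
      (forall s t, covariance P (X (s + t)) (X s) = (rho t)%:E)].

Definition psi (R : realType) (rho : R -> R) (T tau : R) : R :=
  2 / T ^+ 2 * Rintegral (@lebesgue_measure R) `[0, T]
    (fun u => (T - u) * (rho u ^+ 2 + rho (u + tau) * rho (u - tau))).

Definition Cp (R : realType) (rho : R -> R) (p A T : R) : R :=
  Rintegral (@lebesgue_measure R) `[0, A]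
    (fun tau => powR (psi rho T tau) (p / 2)).

From HB Require Import structures.
From mathcomp Require Import all_boot all_order all_algebra.
From mathcomp Require Import all_classical all_reals all_analysis.
From mathcomp Require Import ring lra.
Set Implicit Arguments. Unset Strict Implicit. Unset Printing Implicit Defensive.
Import Order.TTheory GRing.Theory Num.Theory.
Import numFieldNormedType.Exports.
Local Open Scope classical_set_scope.
Local Open Scope ring_scope.

(* For fixed tau, psi(T, tau) is the Fejer-type average
   2/T^2 int_0^T (T - u) g(u) du of the kernel
   g(u) = rho(u)^2 + rho(u + tau) rho(u - tau).  Splitting the integral at a
   point c beyond which |rho| is small, and bounding g on [0, c] through the
   maximum of |rho| on [-A, c + A], gives psi(T, tau) <= O(1/T) + O(eta^2)
   uniformly in tau in [0, A], where eta bounds |rho| beyond c - A; hence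
   C_p(T) -> 0.  Raising psi to the power p/2 requires psi >= 0: the Riemann
   sums of the integral are double sums sum_{i,j} g((i - j) h), which are
   entry sums of a Hadamard product of two covariance matrices of the process,
   hence nonnegative by the Schur product theorem. *)

Section integral_itv.
Context {R : realType}.
Local Notation mu := (@lebesgue_measure R).
Implicit Types (F : R -> R) (a b c : R).

Lemma continuous_integrable_itv F a b : continuous F ->
  mu.-integrable `[a, b] (EFin \o F).
Proof.
move=> Fc; apply: continuous_compact_integrable; first exact: segment_compact.
exact: continuous_subspaceT.
Qed.

Lemma Rintegral_itv_cat F a c b : continuous F -> a <= c -> c <= b ->
  Rintegral mu `[a, b] F = Rintegral mu `[a, c] F + Rintegral mu `[c, b] F.
Proof.
move=> Fc ac cb.
have Fab := continuous_integrable_itv a b Fc.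
rewrite -[LHS](subrK (Rintegral mu `[a, c] F)) addrC.
rewrite (@Rintegral_itvB R F (BLeft a) (BRight b) c) ?bnd_simp //.
rewrite Rintegral_itv_obnd_cbnd //.
by apply: integrableS Fab => //; apply: subset_itvr; rewrite bnd_simp.
Qed.

Lemma Rintegral_itv_cst a b c : a <= b ->
  Rintegral mu `[a, b] (fun=> c) = c * (b - a).
Proof.
rewrite le_eqVlt => /predU1P [<- | ab].
  by rewrite set_itv1 Rintegral_set1 subrr mulr0.
by rewrite Rintegral_cst //= lebesgue_measure_itv /= lte_fin ab.
Qed.

Lemma Rintegral_itv_ge F a b c : continuous F -> a <= b ->
  (forall x, a <= x <= b -> c <= F x) -> c * (b - a) <= Rintegral mu `[a, b] F.
Proof.
move=> Fc ab cF; rewrite -Rintegral_itv_cst //.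
apply: le_Rintegral => //; apply: continuous_integrable_itv => //.
exact: cst_continuous.
Qed.

Lemma Rintegral_itv_le F a b c : continuous F -> a <= b ->
  (forall x, a <= x <= b -> F x <= c) -> Rintegral mu `[a, b] F <= c * (b - a).
Proof.
move=> Fc ab Fc_le; rewrite -Rintegral_itv_cst //.
apply: le_Rintegral => //; apply: continuous_integrable_itv => //.
exact: cst_continuous.
Qed.

Lemma Rintegral_itv_sum F h n : continuous F -> 0 <= h ->
  Rintegral mu `[0, n%:R * h] F =
  \sum_(k < n) Rintegral mu `[k%:R * h, k.+1%:R * h] F.
Proof.
move=> Fc h0; elim: n => [|n IHn].
  by rewrite big_ord0 mul0r set_itv1 Rintegral_set1.
rewrite big_ord_recr /= -IHn; apply: Rintegral_itv_cat => //.
  by rewrite mulr_ge0.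
by rewrite ler_wpM2r // ler_nat.
Qed.

(* Unlike [ge0_le_integral], no measurability is assumed: the integrand of
   [Cp] is not known to be measurable. *)
Lemma ge0_le_integral_sup (D : set R) (f g : R -> \bar R) :
  (forall x, D x -> (0 <= f x)%E) -> (forall x, D x -> (f x <= g x)%E) ->
  (\int[mu]_(x in D) f x <= \int[mu]_(x in D) g x)%E.
Proof.
move=> f0 fg.
have g0 x : D x -> (0 <= g x)%E by move=> Dx; exact: le_trans (f0 x Dx) (fg x Dx).
rewrite !ge0_integralE //.
apply: ge_ereal_sup => _ [s sf <-]; apply: ereal_sup_ubound; exists s => //= x.
apply: le_trans (sf x) _; rewrite /patch; case: ifP => // /set_mem Dx.
exact: fg.
Qed.

Lemma Rintegral_itv_le_ge0 (f : R -> R) a b k : a <= b ->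
  (forall x, a <= x <= b -> 0 <= f x <= k) -> Rintegral mu `[a, b] f <= k * (b - a).
Proof.
move=> ab hf.
have bnd_f x : `[a, b]%classic x -> 0 <= f x <= k by rewrite /= in_itv /=; exact: hf.
have k0 : 0 <= k.
  have /andP [f0 fk] : 0 <= f a <= k by apply: hf; rewrite lexx ab.
  exact: le_trans fk.
have f_le_k : (\int[mu]_(x in `[a, b]) (f x)%:E <= (k * (b - a))%:E)%E.
  rewrite -Rintegral_itv_cst // /Rintegral fineK; last first.
    by rewrite integral_cst //= lebesgue_measure_itv /=; case: ifP.
  by apply: ge0_le_integral_sup => x /bnd_f /andP [f0 fk]; rewrite lee_fin.
rewrite /Rintegral -lee_fin fineK // ge0_fin_numE ?(le_lt_trans f_le_k) ?ltry //.
by apply: integral_ge0 => x /bnd_f /andP [f0 _]; rewrite lee_fin.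
Qed.

Lemma continuous_unif_itv F a b e : continuous F -> 0 < e ->
  exists2 dl, 0 < dl & forall x y, a <= x <= b -> `|x - y| < dl -> `|F x - F y| < e.
Proof.
move=> Fc e0.
have cover x : `[a, b]%classic x -> \forall x' \near x & i \near \oo,
    (forall y, `|x' - y| < i.+1%:R^-1 -> `|F x' - F y| < e).
  move=> _; have /cvgrPdist_lt /(_ (e / 2)) := Fc x.
  move=> /(_ (divr_gt0 e0 (ltr0n _ 2))) /nbhs_ballP [r /= r0 hr].
  have [N hN] := @ltr_add_invr R 0 (r / 2) (divr_gt0 r0 (ltr0n _ 2)).
  rewrite add0r in hN.
  exists (ball x (r / 2), [set n | (N <= n)%N]).
    by split => /=; [apply: nbhsx_ballx; exact: divr_gt0 | exists N].
  move=> [z n] [/= hz hn] y hy.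
  have hxz : `|x - z| < r / 2 by move: hz; rewrite /ball.
  have hnN : n.+1%:R^-1 <= N.+1%:R^-1 :> R.
    by rewrite lef_pV2 ?posrE ?ltr0n // ler_nat ltnS.
  have hxy : `|x - y| < r.
    have := ler_distD z x y.
    set u := n.+1%:R^-1 in hy hnN *; set v := N.+1%:R^-1 in hN hnN *; lra.
  have Fxy := hr y hxy.
  have Fxz : `|F x - F z| < e / 2 by apply: hr; rewrite /ball /=; lra.
  have := ler_distD (F x) (F z) (F y).
  rewrite distrC in Fxz; lra.
have [N _ HN] := (compact_near_coveringP `[a, b]%classic).1
  (@segment_compact R a b) nat \oo
  (fun n x => forall y, `|x - y| < n.+1%:R^-1 -> `|F x - F y| < e) _ cover.
exists N.+1%:R^-1; first by rewrite invr_gt0 ltr0n.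
move=> x y ax; exact: (HN N (leqnn N) x ax y).
Qed.

Lemma riemann_sum_le_Rintegral F b e : continuous F -> 0 < b -> 0 < e ->
  exists2 n : nat, (0 < n)%N &
    b / n%:R * \sum_(k < n) F (k%:R * (b / n%:R)) <= Rintegral mu `[0, b] F + e.
Proof.
move=> Fc b0 e0.
have [dl dl0 Fdl] := continuous_unif_itv 0 b Fc (divr_gt0 e0 b0).
have [m hm] := @ltr_add_invr R 0 (dl / b) (divr_gt0 dl0 b0).
rewrite add0r ltr_pdivlMr // mulrC in hm.
exists m.+1 => //; set h := b / m.+1%:R.
have h0 : 0 < h by rewrite divr_gt0.
have {}hm : h < dl by [].
have step k : k.+1%:R * h - k%:R * h = h by rewrite -addn1 natrD; ring.
have nh : m.+1%:R * h = b by rewrite /h mulrCA divff ?mulr1.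
have piece (k : 'I_m.+1) :
    (F (k%:R * h) - e / b) * h <= Rintegral mu `[k%:R * h, k.+1%:R * h] F.
  have kh0 : 0 <= k%:R * h by rewrite mulr_ge0 // ltW.
  have khb : k%:R * h <= b by rewrite -nh ler_pM2r // ler_nat ltnW.
  rewrite -{2}(step k); apply: Rintegral_itv_ge => //.
    by rewrite -subr_ge0 step ltW.
  move=> x /andP [kx xk]; have := ler_norm (F (k%:R * h) - F x).
  suff : `|F (k%:R * h) - F x| < e / b by lra.
  apply: Fdl; first by rewrite kh0.
  by rewrite ler0_norm ?subr_le0 //; have := step k; lra.
rewrite -nh (Rintegral_itv_sum m.+1 Fc (ltW h0)) -lerBlDr.
apply: le_trans (ler_sum _ (fun k _ => piece k)).
rewrite -mulr_suml sumrB sumr_const card_ord -mulr_natr.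
by rewrite mulrBl mulrC -mulrA [_ * h]mulrC nh divfK ?gt_eqF.
Qed.

Lemma Rintegral_ge0_riemann F b : continuous F -> 0 < b ->
  (forall n, (0 < n)%N -> 0 <= \sum_(k < n) F (k%:R * (b / n%:R))) ->
  0 <= Rintegral mu `[0, b] F.
Proof.
move=> Fc b0 sum_ge0; apply/ler_addgt0Pr => e e0.
have [n n0 le_sum] := riemann_sum_le_Rintegral Fc b0 e0.
by apply: le_trans le_sum; rewrite mulr_ge0 ?sum_ge0 // divr_ge0 ?(ltW b0).
Qed.

Lemma continuous_bounded_itv (F : R -> R) a b : continuous F ->
  exists B, forall x, a <= x <= b -> `|F x| <= B.
Proof.
move=> Fc; have /compact_bounded [M [_ MF]] :=
  continuous_compact (continuous_subspaceT Fc) (@segment_compact R a b).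
exists (M + 1) => x abx; apply: (MF (M + 1)); first by rewrite ltrDl.
by exists x; rewrite //= in_itv.
Qed.

Lemma continuous_weighted (g : R -> R) (T : R) : continuous g ->
  continuous (fun u => (T - u) * g u).
Proof.
move=> gc x; apply: cvgM; last exact: gc.
by apply: cvgB; [exact: cvg_cst | exact: cvg_id].
Qed.

Lemma Rintegral_weighted_le (g : R -> R) T c beta gamma :
  continuous g -> 0 <= c <= T -> 0 <= beta -> 0 <= gamma ->
  (forall u, 0 <= u <= c -> g u <= beta) -> (forall u, c <= u <= T -> g u <= gamma) ->
  Rintegral mu `[0, T] (fun u => (T - u) * g u) <= T * (beta * c + gamma * T).
Proof.
move=> /(continuous_weighted (T := T)) wc /andP [c0 cT] beta0 gamma0 g_beta g_gamma.
have weight_le k u : 0 <= k -> 0 <= u <= T -> g u <= k -> (T - u) * g u <= T * k.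
  move=> k0 /andP [u0 uT] guk; apply: le_trans (_ : (T - u) * k <= _).
    by rewrite ler_wpM2l ?subr_ge0.
  by rewrite ler_wpM2r // lerBlDr lerDl.
have int_c : Rintegral mu `[0, c] (fun u => (T - u) * g u) <= T * beta * (c - 0).
  apply: Rintegral_itv_le => // u /andP [u0 uc].
  by apply: weight_le; rewrite ?u0 ?(le_trans uc cT) ?g_beta ?u0.
have int_T : Rintegral mu `[c, T] (fun u => (T - u) * g u) <= T * gamma * (T - c).
  apply: Rintegral_itv_le => // u /andP [cu uT].
  by apply: weight_le; rewrite ?(le_trans c0 cu) ?uT ?g_gamma ?cu.
rewrite (Rintegral_itv_cat wc c0 cT); apply: le_trans (lerD int_c int_T) _.
rewrite subr0 -subr_ge0 (_ : _ - _ = T * gamma * c); last by ring.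
by rewrite !mulr_ge0 // (le_trans c0 cT).
Qed.

End integral_itv.

Lemma sum_toeplitz_even {R : comPzRingType} (f : R -> R) n :
  (forall x, f (- x) = f x) ->
  \sum_(i < n) \sum_(j < n) f (i%:R - j%:R) + n%:R * f 0 =
  2 * \sum_(k < n) (n%:R - k%:R) * f k%:R.
Proof.
move=> f_even; elim: n => [|n IHn]; first by rewrite !big_ord0 mul0r addr0 mulr0.
have row_n : \sum_(j < n) f (n%:R - j%:R) = \sum_(k < n) f k.+1%:R.
  rewrite (reindex_inj rev_ord_inj); apply: eq_bigr => j _ /=.
  by rewrite natrB // opprB addrCA subrr addr0.
have col_n : \sum_(i < n) f (i%:R - n%:R) = \sum_(k < n) f k.+1%:R.
  by rewrite -row_n; apply: eq_bigr => i _; rewrite -f_even opprB.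
have weightS : \sum_(k < n.+1) (n.+1%:R - k%:R) * f k%:R =
    \sum_(k < n) (n%:R - k%:R) * f k%:R + \sum_(k < n.+1) f k%:R.
  transitivity (\sum_(k < n.+1) ((n%:R - k%:R) * f k%:R + f k%:R)).
    by apply: eq_bigr => k _; rewrite mulrSr; ring.
  by rewrite big_split big_ord_recr /= subrr mul0r addr0.
rewrite big_ord_recr /=; under eq_bigr do rewrite big_ord_recr /=.
rewrite big_split big_ord_recr /= row_n col_n subrr weightS big_ord_recl /=.
rewrite mulrDr -IHn mulrSr.
under [X in _ = _ + 2 * (_ + X)]eq_bigr do rewrite /bump leq0n add1n.
ring.
Qed.

Lemma sum_bool_pair {R : nmodType} (I : finType) (G : bool * I -> R) :
  \sum_x G x = \sum_i G (true, i) + \sum_i G (false, i).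
Proof.
rewrite -(big_bool _ (fun b => \sum_i G (b, i))) pair_big /=.
by apply: eq_big => // -[].
Qed.

Section gram_psd.
Context d (Omega : measurableType d) (R : realType) (P : probability Omega R).

Definition mean (f : Omega -> R) : R := fine 'E_P[f].

Lemma Lfun1_sum (I : finType) (f : I -> Omega -> R) : (forall i, f i \in Lfun P 1) ->
  (fun w => \sum_i f i w) \in Lfun P 1.
Proof.
move=> f1; rewrite (_ : (fun w => _) = \sum_i f i); last first.
  by apply/funext => w; rewrite fct_sumE.
by apply: rpred_sum => i _.
Qed.

Lemma mean_sum (I : finType) (f : I -> Omega -> R) : (forall i, f i \in Lfun P 1) ->
  mean (fun w => \sum_i f i w) = \sum_i mean (f i).
Proof.
move=> f1; rewrite /mean (_ : (fun w => _) = \sum_(g <- map f (enum I)) g).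
  rewrite expectation_sum; last by move=> g /mapP [i _ ->].
  rewrite big_map big_enum -sum_fine //= => i _; exact: expectation_fin_num.
by apply/funext => w; rewrite fct_sumE big_map big_enum.
Qed.

Lemma Lfun1_scale_mul c (f g : Omega -> R) : f \in Lfun P 2%:E -> g \in Lfun P 2%:E ->
  (fun w => c * (f w * g w)) \in Lfun P 1.
Proof.
move=> f2 g2; rewrite (_ : (fun w => _) = c \o* (f \* g)); last first.
  by apply/funext => w /=; rewrite mulrC.
exact/Lfun_scale/Lfun2_mul_Lfun1.
Qed.

Lemma mean_scale_mul c (f g : Omega -> R) : f \in Lfun P 2%:E -> g \in Lfun P 2%:E ->
  mean (fun w => c * (f w * g w)) = c * mean (f \* g).
Proof.
move=> f2 g2; have fg1 := Lfun2_mul_Lfun1 f2 g2.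
rewrite /mean (_ : (fun w => _) = c \o* (f \* g)); last first.
  by apply/funext => w /=; rewrite mulrC.
by rewrite expectationZl // fineM // expectation_fin_num.
Qed.

Lemma mean_quadratic_form (I : finType) (c : I -> I -> R) (u : I -> Omega -> R) :
  (forall i, u i \in Lfun P 2%:E) ->
  mean (fun w => \sum_i \sum_j c i j * (u i w * u j w)) =
  \sum_i \sum_j c i j * mean (u i \* u j).
Proof.
move=> u2; rewrite mean_sum => [|i]; last first.
  by apply: Lfun1_sum => j; exact: Lfun1_scale_mul.
apply: eq_bigr => i _; rewrite mean_sum => [|j]; last exact: Lfun1_scale_mul.
by apply: eq_bigr => j _; rewrite mean_scale_mul.
Qed.

Lemma gram_quadratic_ge0 (I : finType) (c : I -> R) (u : I -> Omega -> R) :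
  (forall i, u i \in Lfun P 2%:E) ->
  0 <= \sum_i \sum_j c i * c j * mean (u i \* u j).
Proof.
move=> u2; rewrite -(mean_quadratic_form (fun i j => c i * c j) u2).
apply: fine_ge0; apply: expectation_ge0 => w.
rewrite (_ : \sum_i _ = (\sum_i c i * u i w) ^+ 2) ?sqr_ge0 //.
rewrite expr2 mulr_suml; apply: eq_bigr => i _.
by rewrite mulr_sumr; apply: eq_bigr => j _; ring.
Qed.

(* Schur product theorem, tested against the all-ones vector. *)
Lemma gram_hadamard_sum_ge0 (I : finType) (u v : I -> Omega -> R) :
  (forall i, u i \in Lfun P 2%:E) -> (forall i, v i \in Lfun P 2%:E) ->
  0 <= \sum_i \sum_j mean (u i \* u j) * mean (v i \* v j).
Proof.
move=> u2 v2.
rewrite (eq_bigr (fun i => \sum_j mean (v i \* v j) * mean (u i \* u j))); last first.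
  by move=> i _; apply: eq_bigr => j _; rewrite mulrC.
rewrite -mean_quadratic_form //; apply: fine_ge0; apply: expectation_ge0 => w.
have := gram_quadratic_ge0 (fun i => u i w) v2.
by congr (_ <= _); apply: eq_bigr => i _; apply: eq_bigr => j _; rewrite mulrC.
Qed.

End gram_psd.

Definition psi_kernel (R : realType) (rho : R -> R) (tau u : R) : R :=
  rho u ^+ 2 + rho (u + tau) * rho (u - tau).

Section psi_upper_bound.
Context {R : realType} (rho : R -> R).
Hypothesis rc : continuous rho.

Lemma continuous_psi_kernel tau : continuous (psi_kernel rho tau).
Proof.
move=> x.
have rc_shift c : {for x, continuous (fun u => rho (u + c))}.
  apply: (@continuous_comp _ _ _ (+%R^~ c)); last exact: rc.
  by apply: cvgD; [exact: cvg_id | exact: cvg_cst].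
have rc_sq : {for x, continuous (fun u => rho u ^+ 2)}.
  apply: (@continuous_comp _ _ _ rho (@GRing.exp R ^~ 2)); first exact: rc.
  exact: exprn_continuous.
exact: cvgD rc_sq (cvgM (rc_shift tau) (rc_shift (- tau))).
Qed.

Lemma psi_kernel_le B tau u : `|rho u| <= B ->
  `|rho (u + tau)| <= B -> `|rho (u - tau)| <= B -> psi_kernel rho tau u <= 2 * B ^+ 2.
Proof.
rewrite /psi_kernel !ler_norml => /andP [x1 x2] /andP [y1 y2] /andP [z1 z2].
rewrite !expr2; nra.
Qed.

Lemma psi_le T tau c beta gamma :
  0 < c <= T -> 0 <= beta -> 0 <= gamma ->
  (forall u, 0 <= u <= c -> psi_kernel rho tau u <= beta) ->
  (forall u, c <= u <= T -> psi_kernel rho tau u <= gamma) ->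
  psi rho T tau <= 2 * (beta * c / T + gamma).
Proof.
move=> /andP [c0 cT] beta0 gamma0 k_beta k_gamma.
have T0 : 0 < T := lt_le_trans c0 cT.
have c0T : 0 <= c <= T by rewrite ltW.
have int_le := Rintegral_weighted_le (continuous_psi_kernel (tau := tau))
  c0T beta0 gamma0 k_beta k_gamma.
rewrite /psi; apply: le_trans (ler_wpM2l _ int_le) _; first by rewrite divr_ge0 ?sqr_ge0.
rewrite [leLHS](_ : _ = 2 * (beta * c / T + gamma)) //.
by field; rewrite gt_eqF.
Qed.

Lemma psi_unif_small A e : 0 < A ->
  rho x @[x --> +oo] --> 0 -> 0 < e ->
  exists T1, forall T, T1 < T -> forall tau, 0 <= tau <= A -> psi rho T tau <= e.
Proof.
move=> A0 rho_cvg0 e0.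
pose eta := Num.min 1 (e / 8).
have eta0 : 0 < eta by rewrite lt_min ltr01 divr_gt0.
have eta_sq : 4 * eta ^+ 2 <= e / 2.
  have eta1 : eta <= 1 by rewrite ge_min lexx.
  have eta_e : eta <= e / 8 by rewrite ge_min lexx orbT.
  rewrite expr2; nra.
move/cvgrPdist_le : rho_cvg0 => /(_ eta eta0) [M [_ rho_tail]].
have rho_small v : M < v -> `|rho v| <= eta by move/rho_tail; rewrite sub0r normrN.
pose c := `|M| + A + 1.
have c0 : 0 < c by rewrite /c; have := normr_ge0 M; lra.
have Mc : M + A < c by rewrite /c; have := ler_norm M; lra.
have [B rhoB] := continuous_bounded_itv (- A) (c + A) rc.
pose K := B ^+ 2 * c.
have K0 : 0 <= K by rewrite mulr_ge0 ?sqr_ge0 ?ltW.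
exists (c + 8 * K / e) => T T1T tau /andP [tau0 tauA].
have q0 : 0 <= 8 * K / e by rewrite divr_ge0 ?(ltW e0) // mulr_ge0.
have cT : 0 < c <= T by rewrite c0 /=; lra.
have T0 : 0 < T by lra.
apply: le_trans (psi_le (beta := 2 * B ^+ 2) (gamma := 2 * eta ^+ 2) cT _ _ _ _) _.
- by rewrite mulr_ge0 ?sqr_ge0.
- by rewrite mulr_ge0 ?sqr_ge0.
- by move=> u /andP [u0 uc]; apply: psi_kernel_le; apply: rhoB; lra.
- by move=> u /andP [cu uT]; apply: psi_kernel_le; apply: rho_small; lra.
have K_small : 2 * B ^+ 2 * c / T <= e / 4.
  rewrite ler_pdivrMr //.
  have : e * (8 * K / e) <= e * T by rewrite ler_wpM2l ?ltW //; lra.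
  by rewrite mulrCA divff ?gt_eqF // mulr1 /K; lra.
lra.
Qed.

End psi_upper_bound.

Section stationary_covariance.
Context d (Omega : measurableType d) (R : realType) (P : probability Omega R)
  (X : R -> Omega -> R) (rho : R -> R).
Hypothesis hX : centered_stationary_cov P X rho.

Lemma mean_mul_stationary s t : mean P (X s \* X t) = rho (s - t).
Proof.
case: hX => X2 X_centered X_cov.
have X1 r : X r \in Lfun P 1 by apply: Lfun_subset12 (X2 r); exact: fin_num_measure.
have := X_cov t (s - t); rewrite (addrC t) subrK.
rewrite covarianceE ?X1 ?Lfun2_mul_Lfun1 // !X_centered mule0 sube0.
by rewrite /mean => ->.
Qed.

Lemma stationary_cov_even t : rho (- t) = rho t.
Proof.
case: hX => _ _ X_cov.
have := X_cov t (- t); rewrite addrN covarianceC.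
by have := X_cov 0 t; rewrite add0r => -> [].
Qed.

Lemma stationary_cov_hadamard_ge0 (I : finType) (s s' : I -> R) :
  0 <= \sum_i \sum_j rho (s i - s j) * rho (s' i - s' j).
Proof.
case: (hX) => X2 _ _.
have := gram_hadamard_sum_ge0 (fun i => X2 (s i)) (fun i => X2 (s' i)).
by under eq_bigr do under eq_bigr do rewrite !mean_mul_stationary.
Qed.

Lemma psi_kernel_even tau x : psi_kernel rho tau (- x) = psi_kernel rho tau x.
Proof.
rewrite /psi_kernel -opprD (_ : - x + tau = - (x - tau)); last by rewrite opprB addrC.
by rewrite !stationary_cov_even mulrC.
Qed.

Lemma psi_kernel0_ge0 tau : 0 <= psi_kernel rho tau 0.
Proof.
by rewrite /psi_kernel add0r sub0r stationary_cov_even -expr2 addr_ge0 ?sqr_ge0.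
Qed.

(* Schur's bound for the times [(i h + tau, i h)] against [(i h, i h + tau)],
   i < n: the four blocks add up to twice the grid sum of the kernel. *)
Lemma psi_kernel_grid_ge0 h tau n :
  0 <= \sum_(i < n) \sum_(j < n) psi_kernel rho tau ((i%:R - j%:R) * h).
Proof.
pose s (x : bool * 'I_n) := x.2%:R * h + (if x.1 then tau else 0).
pose s' (x : bool * 'I_n) := x.2%:R * h + (if x.1 then 0 else tau).
have := stationary_cov_hadamard_ge0 s s'.
under eq_bigr do rewrite sum_bool_pair.
rewrite sum_bool_pair /= -!big_split /= => sum_ge0.
rewrite -(pmulr_rge0 _ (ltr0n R 2)); apply: le_trans sum_ge0 _.
rewrite le_eqVlt; apply/orP; left; apply/eqP.
rewrite mulr_sumr; apply: eq_bigr => i _; rewrite -!big_split mulr_sumr.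
apply: eq_bigr => j _; rewrite /s /s' /psi_kernel /= !addr0.
have -> : i%:R * h + tau - (j%:R * h + tau) = (i%:R - j%:R) * h by ring.
have -> : i%:R * h - j%:R * h = (i%:R - j%:R) * h by ring.
have -> : i%:R * h + tau - j%:R * h = (i%:R - j%:R) * h + tau by ring.
have -> : i%:R * h - (j%:R * h + tau) = (i%:R - j%:R) * h - tau by ring.
ring.
Qed.

Lemma psi_ge0 (S tau : R) : continuous rho -> 0 < S -> 0 <= psi rho S tau.
Proof.
move=> rc S0; rewrite /psi mulr_ge0 ?divr_ge0 ?sqr_ge0 //.
have kc := continuous_weighted (T := S) (continuous_psi_kernel rc (tau := tau)).
apply: (Rintegral_ge0_riemann kc S0) => n n0; set h := S / n%:R.
have nh : n%:R * h = S by rewrite /h mulrCA divff ?mulr1 // pnatr_eq0 -lt0n.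
pose f x := psi_kernel rho tau (x * h).
have f_even x : f (- x) = f x by rewrite /f mulNr psi_kernel_even.
rewrite (eq_bigr (fun k : 'I_n => h * ((n%:R - k%:R) * f k%:R))); last first.
  by move=> k _; rewrite /f -nh; ring.
rewrite -mulr_sumr mulr_ge0 ?divr_ge0 ?(ltW S0) //.
rewrite -(pmulr_rge0 _ (ltr0n R 2)) -(sum_toeplitz_even n f_even).
rewrite addr_ge0 ?mulr_ge0 //.
- exact: psi_kernel_grid_ge0.
- by rewrite /f mul0r psi_kernel0_ge0.
Qed.

End stationary_covariance.

Lemma powR_le_of_le_powRV {R : realType} (x k a : R) : 0 < a -> 0 <= k ->
  0 <= x <= powR k a^-1 -> powR x a <= k.
Proof.
move=> a0 k0 /andP [x0 xk].
apply: le_trans (ge0_ler_powR (ltW a0) _ _ xk) _; rewrite ?nnegrE ?powR_ge0 //.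
by rewrite -powRrM mulVf ?gt_eqF // powRr1.
Qed.

Theorem theorem4 (R : realType) (d : measure_display)
    (Omega : measurableType d) (P : probability Omega R)
    (X : R -> Omega -> R) (rho : R -> R) (p A : R) :
  1 <= p -> 0 < A ->
  centered_stationary_cov P X rho ->
  continuous rho ->
  rho T @[T --> +oo] --> 0 ->
  Cp rho p A T @[T --> +oo] --> 0.
Proof.
move=> p1 A0 hX rc rho_cvg0; apply/cvgrPdist_le => e e0.
have p2 : 0 < p / 2 by rewrite divr_gt0 //; lra.
have eA : 0 < e / A by rewrite divr_gt0.
have [T1 psi_small] := psi_unif_small rc A0 rho_cvg0 (powR_gt0 (p / 2)^-1 eA).
exists (Num.max T1 0); split; first by rewrite num_real.
move=> T; rewrite gt_max => /andP [T1T T0].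
have powR_psi tau : 0 <= tau <= A -> 0 <= powR (psi rho T tau) (p / 2) <= e / A.
  move=> tauA; rewrite powR_ge0 /=; apply: powR_le_of_le_powRV; rewrite ?(ltW eA) //.
  by rewrite (psi_ge0 hX tau rc T0) psi_small.
rewrite /Cp sub0r normrN ger0_norm; last first.
  by apply: Rintegral_ge0 => tau _; exact: powR_ge0.
apply: le_trans (Rintegral_itv_le_ge0 (ltW A0) powR_psi) _.
by rewrite subr0 divfK ?gt_eqF.
Qed.
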